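(* Suppose that $n_1,n_2$ are integers with $n_2\ge n_1\ge 34$. Then $$\frac{n_1}{n_1+n_2}\log\log(n_2)\le\frac12\log\log(n_1).$$
   Context: $\log$ denotes the natural logarithm. *)

From Stdlib Require Import Reals.

(** Write [L x = ln (ln x)]. The claim is [2 a (L b - L a) <= (b - a) L a] for
    [a = n1 <= b = n2]. Two applications of [ln y - ln x <= (y - x) / x] give
    [L b - L a <= (b - a) / (a ln a)], so it suffices that [2 <= ln a * L a],
    which holds as soon as [a >= e^3], in particular for [a >= 34]. *)
From Stdlib Require Import Reals Lra Psatz.
Open Scope R_scope.

Lemma ln_le_sub_1 x : 0 < x -> ln x <= x - 1.
Proof.
  intros Hx.
  pose proof (exp_ineq1_le (ln x)) as H.
  rewrite exp_ln in H by exact Hx.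
  lra.
Qed.

Lemma ln_le x y : 0 < x -> x <= y -> ln x <= ln y.
Proof.
  intros Hx [Hxy | ->].
  - left; apply ln_increasing; assumption.
  - right; reflexivity.
Qed.

Lemma ln_sub_le x y : 0 < x -> 0 < y -> ln y - ln x <= (y - x) / x.
Proof.
  intros Hx Hy.
  assert (Hyx : 0 < y / x) by (apply Rdiv_lt_0_compat; assumption).
  replace (ln y - ln x) with (ln (y / x))
    by (unfold Rdiv; rewrite ln_mult, ln_Rinv by (auto with real); ring).
  replace ((y - x) / x) with (y / x - 1) by (field; lra).
  apply ln_le_sub_1; exact Hyx.
Qed.

Lemma ln_ln_sub_le x y :
  1 < x -> x <= y -> ln (ln y) - ln (ln x) <= (y - x) / (x * ln x).
Proof.
  intros Hx Hxy.
  assert (Hlx : 0 < ln x) by (rewrite <- ln_1; apply ln_increasing; lra).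
  assert (Hly : ln x <= ln y) by (apply ln_le; lra).
  assert (Hlnx : ln y - ln x <= (y - x) / x) by (apply ln_sub_le; lra).
  apply Rle_trans with ((ln y - ln x) / ln x).
  - apply ln_sub_le; lra.
  - replace ((y - x) / (x * ln x)) with ((y - x) / x / ln x) by (field; lra).
    unfold Rdiv; apply Rmult_le_compat_r.
    + left; apply Rinv_0_lt_compat; exact Hlx.
    + exact Hlnx.
Qed.

Lemma ln_ln_weighted_le a b :
  1 < a -> 2 <= ln a * ln (ln a) -> a <= b ->
  a / (a + b) * ln (ln b) <= 1 / 2 * ln (ln a).
Proof.
  intros Ha Hgrowth Hab.
  assert (Hla : 0 < ln a) by (rewrite <- ln_1; apply ln_increasing; lra).
  pose proof (ln_ln_sub_le a b Ha Hab) as Hincr.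
  set (La := ln (ln a)) in *; set (Lb := ln (ln b)) in *; set (la := ln a) in *.
  assert (Hkey : 2 * a * (Lb - La) <= (b - a) * La).
  { apply Rle_trans with (2 * (b - a) / la).
    - replace (2 * (b - a) / la) with (2 * a * ((b - a) / (a * la))) by (field; lra).
      apply Rmult_le_compat_l; lra.
    - apply (Rmult_le_reg_r la); [exact Hla|].
      replace (2 * (b - a) / la * la) with ((b - a) * 2) by (field; lra).
      replace ((b - a) * La * la) with ((b - a) * (la * La)) by ring.
      apply Rmult_le_compat_l; lra. }
  apply (Rmult_le_reg_l (2 * (a + b))); [lra|].
  replace (2 * (a + b) * (a / (a + b) * Lb)) with (2 * a * Lb) by (field; lra).
  lra.
Qed.

Lemma exp_3_lt_34 : exp 3 < 34.
Proof.
  replace 3 with (1 + 1 + 1) by ring.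
  rewrite !exp_plus.
  pose proof exp_le_3; pose proof (exp_pos 1).
  nra.
Qed.

Lemma ln_mul_ln_ln_ge_2 a : exp 3 <= a -> 2 <= ln a * ln (ln a).
Proof.
  intros Ha.
  assert (Hla : 3 <= ln a) by (rewrite <- (ln_exp 3); apply ln_le; [apply exp_pos | exact Ha]).
  assert (Hlla : 1 <= ln (ln a)).
  { rewrite <- (ln_exp 1); apply ln_le; [apply exp_pos|].
    pose proof exp_le_3; lra. }
  assert (3 * 1 <= ln a * ln (ln a)) by (apply Rmult_le_compat; lra).
  lra.
Qed.

Theorem lemma1 (n1 n2 : nat) :
  (34 <= n1)%nat -> (n1 <= n2)%nat ->
  INR n1 / (INR n1 + INR n2) * ln (ln (INR n2)) <= 1 / 2 * ln (ln (INR n1)).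
Proof.
  intros H1 H12.
  assert (Ha : 34 <= INR n1) by (replace 34 with (INR 34) by (simpl; lra); apply le_INR; exact H1).
  pose proof exp_3_lt_34.
  apply ln_ln_weighted_le.
  - lra.
  - apply ln_mul_ln_ln_ge_2; lra.
  - apply le_INR; exact H12.
Qed.
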